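(* For all integers $n\ge 1$ and nonnegative integers $a,b$, $$\det\left[\binom{2i+2a}{j+b}\right]_{i,j=0}^{n-1}=2^{\binom{n}{2}}\prod_{i=0}^{n-1}\frac{(2i+2a)!\,i!}{(i+b)!\,(2i+2a-b)!}=2^{\binom{n}{2}}\prod_{i=0}^{n-1}\binom{2i+2a}{b}\binom{i+b}{b}^{-1}.$$ In particular, $\det\left[\binom{2i}{j}\right]_{i,j=0}^{n-1}=2^{\binom n2}$.
   Context: Binomial coefficients follow the convention $\binom{m}{k}=0$ if $k<0$ or $k>m$ (in the middle expression, a term with $2i+2a<b$ is interpreted as $0$, consistent with the rightmost expression). *)

From HB Require Import structures.
From mathcomp Require Import all_boot all_order all_algebra.
Set Implicit Arguments. Unset Strict Implicit. Unset Printing Implicit Defensive.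
Import Order.TTheory GRing.Theory Num.Theory.
Local Open Scope ring_scope.

Definition binom_mx (n a b : nat) : 'M[rat]_n :=
  \matrix_(i < n, j < n) ('C(2 * i + 2 * a, j + b))%:R.

Definition mid_factor (a b i : nat) : rat :=
  if (b <= 2 * i + 2 * a)%N then
    ((2 * i + 2 * a)`!)%:R * (i`!)%:R / (((i + b)`!)%:R * ((2 * i + 2 * a - b)`!)%:R)
  else 0.

From HB Require Import structures.
From mathcomp Require Import all_boot all_order all_algebra.
From mathcomp Require Import ring.
Import Order.TTheory GRing.Theory Num.Theory.
Local Open Scope ring_scope.

(* The identity C(x, j+b) C(j+b, b) = C(x, b) C(x-b, j) factors the matrix as
   diag(C(2i+2a, b)) [C(2i+2a-b, j)] diag(C(j+b, b))^-1, which reduces the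
   problem to b = 0 (when b > 2a the first row vanishes).  For b = 0 write
   C(x, j) = p_j(x) with p_j = X(X-1)...(X-j+1)/j!: the matrix [p_j(x_i)] is the
   transposed Vandermonde matrix of the x_i times the upper triangular
   coefficient matrix of the p_j, whose diagonal is 1/j!.  For x_i = 2i + c the
   Vandermonde determinant is prod_j 2^j j!, leaving prod_j 2^j = 2^C(n,2). *)

Section BinomialPolynomial.

Variable R : numFieldType.

Lemma natr_fact_neq0 (j : nat) : (j`!)%:R != 0 :> R.
Proof. by rewrite pnatr_eq0 -lt0n fact_gt0. Qed.

Lemma natr_bin (m k : nat) : (k <= m)%N ->
  'C(m, k)%:R = (m`!)%:R / ((k`!)%:R * ((m - k)`!)%:R) :> R.
Proof.
move=> le_km; rewrite -(bin_fact le_km) !natrM mulfK //.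
by rewrite mulf_neq0 ?natr_fact_neq0.
Qed.

Definition binom_poly (j : nat) : {poly R} :=
  (j`!)%:R^-1 *: \prod_(l < j) ('X - l%:R%:P).

Lemma prod_natr_subr (x j : nat) :
  \prod_(l < j) (x%:R - l%:R) = (x ^_ j)%:R :> R.
Proof.
elim: j => [|j IHj]; first by rewrite big_ord0.
rewrite big_ord_recr /= IHj ffactnSr.
have [le_jx | lt_xj] := leqP j x; first by rewrite natrM natrB.
by rewrite ffact_small // !mul0r.
Qed.

Lemma binom_poly_natr (x j : nat) : (binom_poly j).[x%:R] = ('C(x, j))%:R.
Proof.
rewrite hornerZ horner_prod; under eq_bigr do rewrite hornerXsubC.
by rewrite prod_natr_subr -bin_ffact natrM mulrC mulrK ?unitfE ?natr_fact_neq0.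
Qed.

Lemma size_binom_poly (j : nat) : size (binom_poly j) = j.+1.
Proof.
rewrite size_scale ?invr_eq0 ?natr_fact_neq0 //.
by rewrite size_prod_XsubC /index_enum -enumT size_enum_ord.
Qed.

Lemma lead_coef_binom_poly (j : nat) : lead_coef (binom_poly j) = (j`!)%:R^-1.
Proof. by rewrite lead_coefZ lead_coef_prod_XsubC mulr1. Qed.

Lemma det_binom_poly_eval (n : nat) (x : 'I_n -> R) :
  \det (\matrix_(i < n, j < n) (binom_poly j).[x i])
  = \prod_(i < n) \prod_(j < n | (i < j)%N) (x j - x i) * \prod_(j < n) (j`!)%:R^-1.
Proof.
pose C : 'M[R]_n := \matrix_(k < n, j < n) (binom_poly j)`_k.
have -> : \matrix_(i < n, j < n) (binom_poly j).[x i]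
          = (Vandermonde n (\row_i x i))^T *m C.
  apply/matrixP => i j; rewrite !mxE (@horner_coef_wide _ n); last first.
    by rewrite size_binom_poly ltn_ord.
  by apply: eq_bigr => k _; rewrite !mxE mulrC.
rewrite det_mulmx det_tr det_Vandermonde -det_tr det_trig; last first.
  by apply/is_trig_mxP => i j lt_ij; rewrite !mxE nth_default // size_binom_poly.
congr (_ * _).
  by apply: eq_bigr => i _; apply: eq_bigr => j _; rewrite !mxE.
by apply: eq_bigr => j _; rewrite !mxE -lead_coef_binom_poly /lead_coef size_binom_poly.
Qed.

End BinomialPolynomial.

Lemma ffactnD (x m k : nat) : (x ^_ (m + k) = x ^_ m * (x - m) ^_ k)%N.
Proof.
elim: k => [|k IHk]; first by rewrite addn0 ffactn0 muln1.
by rewrite addnS !ffactnSr IHk subnDA mulnA.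
Qed.

Lemma mul_bin_bin (x j b : nat) :
  ('C(x, j + b) * 'C(j + b, b) = 'C(x, b) * 'C(x - b, j))%N.
Proof.
have fact_gt0_bj : (0 < b`! * j`!)%N by rewrite muln_gt0 !fact_gt0.
have bin_jb : ('C(j + b, b) * (b`! * j`!) = (j + b)`!)%N.
  by rewrite -{2}(addnK b j) bin_fact ?leq_addl.
apply/eqP; rewrite -(eqn_pmul2r fact_gt0_bj) -mulnA bin_jb bin_ffact.
by rewrite mulnACA !bin_ffact addnC ffactnD.
Qed.

Lemma prod_lt_exchange (R : comPzRingType) (n : nat) (F : nat -> nat -> R) :
  \prod_(i < n) \prod_(j < n | (i < j)%N) F i j
  = \prod_(j < n) \prod_(i < j) F i j.
Proof.
rewrite (exchange_big_dep predT) //=; apply: eq_bigr => j _.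
by rewrite (big_ord_narrow (ltnW (ltn_ord j))).
Qed.

Lemma prod_natr_sub_double (R : pzRingType) (c j : nat) :
  \prod_(i < j) ((2 * j + c)%N%:R - (2 * i + c)%N%:R) = (2 ^ j * j`!)%N%:R :> R.
Proof.
transitivity (\prod_(i < j) (2 * (j - i))%N%:R : R).
  apply: eq_bigr => i _; rewrite -natrB; last by rewrite leq_add2r leq_mul2l ltnW.
  by rewrite subnDr mulnBr.
by rewrite -natr_prod big_split /= prod_nat_const card_ord -ffact_prod ffactnn.
Qed.

Lemma det_binom_progression (R : numFieldType) (n c : nat) :
  \det (\matrix_(i < n, j < n) ('C(2 * i + c, j))%:R) = 2 ^+ 'C(n, 2) :> R.
Proof.
transitivity (\det (\matrix_(i < n, j < n) (binom_poly R j).[(2 * i + c)%N%:R])).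
  by congr (\det _); apply/matrixP => i j; rewrite !mxE binom_poly_natr.
rewrite det_binom_poly_eval /=.
rewrite (prod_lt_exchange _ _ (fun i j : nat => (2 * j + c)%N%:R - (2 * i + c)%N%:R)).
rewrite (eq_bigr _ (fun (j : 'I_n) _ => prod_natr_sub_double R c j)).
rewrite -big_split /= -bin2_sum big_mkord -prodrXr.
by apply: eq_bigr => j _; rewrite natrM mulfK ?natr_fact_neq0 ?natrX.
Qed.

Lemma binom_mx_factor (n a b : nat) :
  binom_mx n a b
  = diag_mx (\row_(i < n) ('C(2 * i + 2 * a, b))%:R)
    *m \matrix_(i < n, j < n) ('C(2 * i + 2 * a - b, j))%:R
    *m diag_mx (\row_(j < n) ('C(j + b, b))%:R^-1).
Proof.
apply/matrixP => i j; rewrite mul_mx_diag mul_diag_mx !mxE.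
rewrite -natrM -mul_bin_bin natrM mulfK // pnatr_eq0 -lt0n bin_gt0.
exact: leq_addl.
Qed.

Lemma det_binom_mx (n a b : nat) :
  \det (binom_mx n a b)
  = 2 ^+ 'C(n, 2) * \prod_(i < n) (('C(2 * i + 2 * a, b))%:R / ('C(i + b, b))%:R).
Proof.
rewrite binom_mx_factor !det_mulmx !det_diag big_split /=.
under eq_bigr do rewrite mxE.
under [X in _ * X = _]eq_bigr do rewrite mxE.
have [le_b2a | lt_2ab] := leqP b (2 * a).
  rewrite (_ : \matrix_(i, j) _ = \matrix_(i < n, j < n) ('C(2 * i + (2 * a - b), j))%:R).
    by rewrite det_binom_progression mulrAC [RHS]mulrC.
  by apply/matrixP => i j; rewrite !mxE addnBA.
case: n => [|n]; first by rewrite det_mx00 !big_ord0 !mulr1.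
by rewrite big_ord_recl /= muln0 add0n bin_small // !mul0r mulr0.
Qed.

Lemma mid_factorE (a b i : nat) :
  mid_factor a b i = ('C(2 * i + 2 * a, b))%:R / ('C(i + b, b))%:R.
Proof.
rewrite /mid_factor; case: ifP => [le_bx | /negbT]; last first.
  by rewrite -ltnNge => /bin_small ->; rewrite mul0r.
rewrite !natr_bin ?leq_addl // addnK.
by field; rewrite ?mulf_neq0 ?natr_fact_neq0.
Qed.

Theorem mainTheorem1 :
  (forall n a b : nat, (1 <= n)%N ->
     \det (binom_mx n a b)
       = 2 ^+ 'C(n, 2) * \prod_(i < n) mid_factor a b i
     /\ 2 ^+ 'C(n, 2) * \prod_(i < n) mid_factor a b i
       = 2 ^+ 'C(n, 2) * \prod_(i < n)
           (('C(2 * i + 2 * a, b))%:R * (('C(i + b, b))%:R)^-1))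
  /\ (forall n : nat, (1 <= n)%N -> \det (binom_mx n 0 0) = 2 ^+ 'C(n, 2)).
Proof.
have prod_mid_factorE n a b : \prod_(i < n) mid_factor a b i
    = \prod_(i < n) (('C(2 * i + 2 * a, b))%:R / ('C(i + b, b))%:R).
  by apply: eq_bigr => i _; rewrite mid_factorE.
split=> [n a b _ | n _].
  by rewrite prod_mid_factorE det_binom_mx.
by rewrite det_binom_mx big1 ?mulr1 // => i _; rewrite !bin0 divr1.
Qed.
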